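(* Let $G$ be a compactly generated locally compact group, $N$ a closed normal subgroup of $G$, and $\Gamma$ a connected graph of finite degree on which $G$ acts vertex-transitively by automorphisms. (1) If $\Gamma$ is a Cayley-Abels graph for $G$, then $\Gamma/N$ is a Cayley-Abels graph for $G/N$ (with the action induced from that of $G$ on $\Gamma/N$). (2) $\deg(\Gamma/N) \le \deg(\Gamma)$, with equality if and only if $N$ acts freely modulo kernel on $\Gamma$.
   Context: Graphs $\Gamma=(V,E,o,r)$: vertex set $V$, directed edge set $E$, initial-vertex map $o:E\to V$, involutive edge reversal $e\mapsto\bar e$; $\deg(v)=|o^{-1}(v)|$, $\deg(\Gamma)=\sup_v \deg(v)$. For a group $N$ acting on $\Gamma$, the quotient graph $\Gamma/N$ has as vertices the $N$-orbits on $V$ and as edges the $N$-orbits on $E$, with $o(Ne)=No(e)$, $\overline{Ne}=N\bar e$; if $N \trianglelefteq G$ the action of $G$ on $\Gamma/N$ factors through $G/N$. A Cayley-Abels graph for a locally compact group $G$ is a connected graph of finite degree on which $G$ acts vertex-transitively by automorphisms such that vertex stabilizers are open and connected-by-compact (i.e. a stabilizer $U$ satisfies that $U/G^\circ$ is compact; equivalently it is a Cayley-Abels graph for the totally disconnected group $G/G^\circ$ with compact open vertex stabilizers). A group $N$ acting on $\Gamma$ acts freely modulo kernel if for every vertex $v$, the stabilizer $N_{(v)}$ acts trivially on both the vertices and the edges of $\Gamma$. *)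

From Stdlib Require Import List Arith Classical.
Import ListNotations.

Record TopGroup := {
  carrier :> Type;
  gmul : carrier -> carrier -> carrier;
  ginv : carrier -> carrier;
  gone : carrier;
  gmulA : forall x y z, gmul x (gmul y z) = gmul (gmul x y) z;
  gmul1g : forall x, gmul gone x = x;
  gmulVg : forall x, gmul (ginv x) x = gone;
  gopen : (carrier -> Prop) -> Prop;
  gopen_all : gopen (fun _ => True);
  gopen_union : forall F : (carrier -> Prop) -> Prop,
      (forall U, F U -> gopen U) -> gopen (fun x => exists U, F U /\ U x);
  gopen_inter : forall U W, gopen U -> gopen W -> gopen (fun x => U x /\ W x);
  gmul_cont : forall U x y, gopen U -> U (gmul x y) ->
      exists A B, gopen A /\ gopen B /\ A x /\ B y /\
                  (forall a b, A a -> B b -> U (gmul a b));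
  ginv_cont : forall U, gopen U -> gopen (fun x => U (ginv x))
}.

Arguments gmul {t}.
Arguments ginv {t}.
Arguments gone {t}.
Arguments gopen {t}.

Definition closed_set {G : TopGroup} (C : G -> Prop) : Prop :=
  gopen (fun x => ~ C x).

Definition compact {G : TopGroup} (K : G -> Prop) : Prop :=
  forall F : (G -> Prop) -> Prop,
    (forall U, F U -> gopen U) ->
    (forall x, K x -> exists U, F U /\ U x) ->
    exists l : list (G -> Prop),
      (forall U, In U l -> F U) /\ (forall x, K x -> exists U, In U l /\ U x).

Definition hausdorff (G : TopGroup) : Prop :=
  forall x y : G, x <> y -> exists U W, gopen U /\ gopen W /\ U x /\ W y /\
     (forall z, U z -> W z -> False).

Definition locally_compact (G : TopGroup) : Prop :=
  hausdorff G /\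
  forall x : G, exists K U, compact K /\ gopen U /\ U x /\ (forall y, U y -> K y).

Inductive generated {G : TopGroup} (K : G -> Prop) : G -> Prop :=
| gen_one : generated K gone
| gen_in : forall x, K x -> generated K x
| gen_mul : forall x y, generated K x -> generated K y -> generated K (gmul x y)
| gen_inv : forall x, generated K x -> generated K (ginv x).

Definition compactly_generated (G : TopGroup) : Prop :=
  exists K : G -> Prop, compact K /\ forall g, generated K g.

Definition connected_set {G : TopGroup} (C : G -> Prop) : Prop :=
  ~ exists U W, gopen U /\ gopen W /\
      (forall x, C x -> U x \/ W x) /\
      (exists x, C x /\ U x) /\ (exists x, C x /\ W x) /\
      (forall x, C x -> U x -> W x -> False).

Definition id_component (G : TopGroup) : G -> Prop :=
  fun x => exists C : G -> Prop, connected_set C /\ C gone /\ C x.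

(* "U / H is compact" (image of U in G/H compact, quotient topology):
   the open sets of G/H are exactly the images of the open subsets of G that
   are saturated for right multiplication by H; so this says every cover of U
   by H-saturated open sets has a finite subcover. *)
Definition compact_mod {G : TopGroup} (H U : G -> Prop) : Prop :=
  forall F : (G -> Prop) -> Prop,
    (forall W, F W -> gopen W /\ (forall x h, W x -> H h -> W (gmul x h))) ->
    (forall x, U x -> exists W, F W /\ W x) ->
    exists l : list (G -> Prop),
      (forall W, In W l -> F W) /\ (forall x, U x -> exists W, In W l /\ W x).

Definition subgroup {G : TopGroup} (N : G -> Prop) : Prop :=
  N gone /\ (forall x y, N x -> N y -> N (gmul x y)) /\ (forall x, N x -> N (ginv x)).

Definition closed_normal_subgroup {G : TopGroup} (N : G -> Prop) : Prop :=
  subgroup N /\ (forall g n, N n -> N (gmul (ginv g) (gmul n g))) /\ closed_set N.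

(* pi : G -> Q realises the topological quotient group G/N:
   a continuous, open, surjective homomorphism with kernel N
   (this determines Q up to isomorphism of topological groups). *)
Definition is_quotient_map {G Q : TopGroup} (N : G -> Prop) (pi : G -> Q) : Prop :=
  (forall x y, pi (gmul x y) = gmul (pi x) (pi y)) /\
  (forall q, exists g, pi g = q) /\
  (forall g, pi g = gone <-> N g) /\
  (forall U, gopen U -> gopen (fun g => U (pi g))) /\
  (forall U, gopen U -> gopen (fun q => exists g, U g /\ pi g = q)).

(* Graphs (Serre convention)                                            *)

Record graph := {
  V : Type;
  E : Type;
  org : E -> V;
  rev : E -> E;
  revK : forall e, rev (rev e) = e
}.

Arguments org {g}.
Arguments rev {g}.

Definition term {Gm : graph} (e : E Gm) : V Gm := org (rev e).

Inductive reach (Gm : graph) (u : V Gm) : V Gm -> Prop :=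
| reach_refl : reach Gm u u
| reach_step : forall e, reach Gm u (org e) -> reach Gm u (term e).

Definition connected_graph (Gm : graph) : Prop :=
  inhabited (V Gm) /\ forall u v : V Gm, reach Gm u v.

Definition has_card {X : Type} (P : X -> Prop) (n : nat) : Prop :=
  exists l : list X, NoDup l /\ length l = n /\ forall x, In x l <-> P x.

Definition vdeg_is (Gm : graph) (v : V Gm) (n : nat) : Prop :=
  has_card (fun e : E Gm => org e = v) n.

Definition finite_degree (Gm : graph) : Prop :=
  exists d, forall v, exists k, k <= d /\ vdeg_is Gm v k.

Definition deg_is (Gm : graph) (d : nat) : Prop :=
  (forall v, exists k, k <= d /\ vdeg_is Gm v k) /\ (exists v, vdeg_is Gm v d).

Definition graph_action (G : TopGroup) (Gm : graph)
  (aV : G -> V Gm -> V Gm) (aE : G -> E Gm -> E Gm) : Prop :=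
  (forall v, aV gone v = v) /\ (forall e, aE gone e = e) /\
  (forall g h v, aV (gmul g h) v = aV g (aV h v)) /\
  (forall g h e, aE (gmul g h) e = aE g (aE h e)) /\
  (forall g e, org (aE g e) = aV g (org e)) /\
  (forall g e, rev (aE g e) = aE g (rev e)).

Definition vertex_transitive (G : TopGroup) (Gm : graph) (aV : G -> V Gm -> V Gm) : Prop :=
  forall u v, exists g, aV g u = v.

Definition stabilizer {G : TopGroup} {Gm : graph} (aV : G -> V Gm -> V Gm) (v : V Gm) : G -> Prop :=
  fun g => aV g v = v.

Definition cayley_abels (G : TopGroup) (Gm : graph)
  (aV : G -> V Gm -> V Gm) (aE : G -> E Gm -> E Gm) : Prop :=
  connected_graph Gm /\ finite_degree Gm /\ graph_action G Gm aV aE /\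
  vertex_transitive G Gm aV /\
  forall v, gopen (stabilizer aV v) /\ compact_mod (id_component G) (stabilizer aV v).

(* (D, pV, pE) realises the quotient graph Gm/N: vertices and edges of D are
   the N-orbits, with o(Ne) = N o(e) and rev(Ne) = N rev(e). *)
Definition is_quotient_graph (G : TopGroup) (N : G -> Prop) (Gm : graph)
  (aV : G -> V Gm -> V Gm) (aE : G -> E Gm -> E Gm)
  (D : graph) (pV : V Gm -> V D) (pE : E Gm -> E D) : Prop :=
  (forall w, exists v, pV v = w) /\ (forall f, exists e, pE e = f) /\
  (forall x y, pV x = pV y <-> exists n, N n /\ aV n x = y) /\
  (forall x y, pE x = pE y <-> exists n, N n /\ aE n x = y) /\
  (forall e, org (pE e) = pV (org e)) /\
  (forall e, rev (pE e) = pE (rev e)).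

Definition acts_freely_mod_kernel {G : TopGroup} (N : G -> Prop) (Gm : graph)
  (aV : G -> V Gm -> V Gm) (aE : G -> E Gm -> E Gm) : Prop :=
  forall v n, N n -> aV n v = v ->
    (forall w, aV n w = w) /\ (forall e, aE n e = e).

(* The quotient map [pi] is onto and the stabilizer of N v in G/N is the
   image of the stabilizer of v, so connectedness, openness of stabilizers
   and their compactness modulo the identity component all pass to the
   quotient through the continuous open homomorphism [pi].
   The star at N v is the image of the star at v under e |-> N e, whence
   deg(N v) <= deg(v); since G permutes the stars and normalises N, both
   graphs are regular.  Equality holds iff e |-> N e is injective on stars,
   i.e. an element of N fixing a vertex fixes its star; by connectedness it
   then fixes every vertex and every edge. *)

From Stdlib Require Import List Classical Lia.
From Stdlib Require Import FunctionalExtensionality PropExtensionality.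

Lemma mulgV (G : TopGroup) (x : G) : gmul x (ginv x) = gone.
Proof.
  assert (H : gmul (ginv x) (gmul x (ginv x)) = ginv x).
  { rewrite gmulA, gmulVg, gmul1g. reflexivity. }
  transitivity (gmul (gmul (ginv (ginv x)) (ginv x)) (gmul x (ginv x))).
  { rewrite gmulVg, gmul1g. reflexivity. }
  rewrite <- gmulA, H, gmulVg. reflexivity.
Qed.

Lemma mulg1 (G : TopGroup) (x : G) : gmul x gone = x.
Proof. rewrite <- (gmulVg G x), gmulA, mulgV, gmul1g. reflexivity. Qed.

Lemma invgK (G : TopGroup) (x : G) : ginv (ginv x) = x.
Proof.
  rewrite <- (mulg1 G (ginv (ginv x))), <- (gmulVg G x), gmulA, gmulVg, gmul1g.
  reflexivity.
Qed.

Lemma mulg_idem_one (G : TopGroup) (x : G) : gmul x x = x -> x = gone.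
Proof.
  intros Hx. transitivity (gmul (ginv x) (gmul x x)).
  - rewrite gmulA, gmulVg, gmul1g. reflexivity.
  - rewrite Hx. apply gmulVg.
Qed.

Lemma list_choice {A B : Type} (P : A -> B -> Prop) (l : list A) :
  (forall a, In a l -> exists b, P a b) ->
  exists lb, (forall b, In b lb -> exists a, In a l /\ P a b) /\
             (forall a, In a l -> exists b, In b lb /\ P a b).
Proof.
  induction l as [|a l IH]; intros H.
  - exists nil. split; intros x Hx; inversion Hx.
  - destruct IH as [lb [H1 H2]]. { intros x Hx. apply H. right; auto. }
    destruct (H a (or_introl eq_refl)) as [b Hb].
    exists (b :: lb). split.
    + intros y [<-|Hy]; [exists a; split; [left|]; auto|].
      destruct (H1 y Hy) as [x [? ?]]. exists x; split; [right|]; auto.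
    + intros x [<-|Hx]; [exists b; split; [left|]; auto|].
      destruct (H2 x Hx) as [y [? ?]]. exists y; split; [right|]; auto.
Qed.

Lemma has_card_ext {X : Type} (P P' : X -> Prop) n :
  (forall x, P x <-> P' x) -> has_card P n -> has_card P' n.
Proof.
  intros HP [l [Hnd [Hlen Hl]]]. exists l. split; [exact Hnd|]. split; [exact Hlen|].
  intro x. rewrite Hl. apply HP.
Qed.

Section Transversals.

Variables (X Y : Type) (f : X -> Y).

Definition img (l : list X) : Y -> Prop := fun y => exists x, In x l /\ f x = y.

Definition injective_on (l : list X) : Prop :=
  forall x y, In x l -> In y l -> f x = f y -> x = y.

Definition transversal (l r : list X) : Prop :=
  incl r l /\ NoDup (map f r) /\ forall x, In x l -> exists x', In x' r /\ f x = f x'.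

Lemma transversal_exists (l : list X) : exists r, transversal l r.
Proof.
  induction l as [|a l [r [Hincl [Hnd Hcov]]]].
  - exists nil. split; [intros x []|]. split; [constructor|]. intros x [].
  - destruct (classic (exists x', In x' r /\ f a = f x')) as [Ha|Hnew].
    + exists r. split; [intros x Hx; right; auto|]. split; [exact Hnd|].
      intros x [<-|Hx]; auto.
    + exists (a :: r). split; [intros x [<-|Hx]; [left|right; auto]; auto|].
      split.
      * constructor; [|exact Hnd]. intros Hin. apply in_map_iff in Hin.
        destruct Hin as [x [Hfx Hx]]. apply Hnew. eauto.
      * intros x [<-|Hx]; [exists a; split; [left|]; auto|].
        destruct (Hcov x Hx) as [x' [? ?]]. exists x'; split; [right|]; auto.
Qed.

Lemma NoDup_map_injective_on (l : list X) : NoDup (map f l) -> injective_on l.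
Proof.
  induction l as [|a l IH]; simpl; intros Hnd x y Hx Hy Hf; [contradiction|].
  inversion Hnd as [|b m Hnin Hnd' Hb]; subst.
  destruct Hx as [<-|Hx]; destruct Hy as [<-|Hy].
  - reflexivity.
  - exfalso. apply Hnin. rewrite Hf. apply in_map; exact Hy.
  - exfalso. apply Hnin. rewrite <- Hf. apply in_map; exact Hx.
  - exact (IH Hnd' x y Hx Hy Hf).
Qed.

Lemma img_card_transversal (l r : list X) :
  transversal l r -> has_card (img l) (length r).
Proof.
  intros [Hincl [Hnd Hcov]]. exists (map f r).
  split; [exact Hnd|]. split; [apply length_map|].
  intros y; split.
  - intros Hy. apply in_map_iff in Hy. destruct Hy as [x [<- Hx]]. exists x; auto.
  - intros [x [Hx <-]]. destruct (Hcov x Hx) as [x' [Hx' ->]]. apply in_map; auto.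
Qed.

Lemma transversal_length_le (l r : list X) :
  NoDup l -> transversal l r -> length r <= length l.
Proof.
  intros Hl [Hincl [Hnd _]]. apply NoDup_incl_length; [|exact Hincl].
  eapply NoDup_map_inv; eauto.
Qed.

Lemma transversal_length_eq_iff (l r : list X) :
  NoDup l -> transversal l r -> (length r = length l <-> injective_on l).
Proof.
  intros Hl Htr. pose proof (transversal_length_le l r Hl Htr) as Hle.
  destruct Htr as [Hincl [Hnd Hcov]]. split.
  - intros Hlen. assert (Hr : NoDup r) by (eapply NoDup_map_inv; eauto).
    assert (Hlr : incl l r) by (apply NoDup_length_incl; auto; lia).
    intros x y Hx Hy. apply (NoDup_map_injective_on r); auto.
  - intros Hinj. assert (Hlr : incl l r).
    { intros x Hx. destruct (Hcov x Hx) as [x' [Hx' Hf]].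
      rewrite (Hinj x x' Hx (Hincl x' Hx') Hf). exact Hx'. }
    pose proof (NoDup_incl_length Hl Hlr). lia.
Qed.

End Transversals.

Arguments img {X Y}.
Arguments injective_on {X Y}.
Arguments transversal {X Y}.

Lemma transversal_same_fibres {X Y Z : Type} (f : X -> Y) (h : X -> Z) (l r : list X) :
  (forall x y, f x = f y <-> h x = h y) -> transversal f l r -> transversal h l r.
Proof.
  intros Hfib [Hincl [Hnd Hcov]]. split; [exact Hincl|]. split.
  - apply NoDup_map_NoDup_ForallPairs; [|eapply NoDup_map_inv; eauto].
    intros x y Hx Hy Hh. apply (NoDup_map_injective_on _ _ f r Hnd); auto.
    apply Hfib; exact Hh.
  - intros x Hx. destruct (Hcov x Hx) as [x' [Hx' Hf]].
    exists x'; split; [exact Hx'|]. apply Hfib; exact Hf.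
Qed.

Section GraphAction.

Variables (G : TopGroup) (Gm : graph) (aV : G -> V Gm -> V Gm) (aE : G -> E Gm -> E Gm).
Hypothesis Hact : graph_action G Gm aV aE.

Lemma actE_invK g e : aE (ginv g) (aE g e) = e.
Proof.
  destruct Hact as [_ [a1 [_ [aM _]]]]. rewrite <- aM, gmulVg, a1. reflexivity.
Qed.

Lemma actE_Kinv g e : aE g (aE (ginv g) e) = e.
Proof.
  destruct Hact as [_ [a1 [_ [aM _]]]]. rewrite <- aM, mulgV, a1. reflexivity.
Qed.

Lemma actV_invK g v : aV (ginv g) (aV g v) = v.
Proof.
  destruct Hact as [a1 [_ [aM _]]]. rewrite <- aM, gmulVg, a1. reflexivity.
Qed.

Lemma act_star (v : V Gm) (l : list (E Gm)) g :
  (forall e, In e l <-> org e = v) ->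
  forall e, In e (map (aE g) l) <-> org e = aV g v.
Proof.
  destruct Hact as [_ [_ [_ [_ [aorg _]]]]]. intros Hl e. rewrite in_map_iff. split.
  - intros [x [<- Hx]]. rewrite aorg. f_equal. apply Hl; exact Hx.
  - intros He. exists (aE (ginv g) e). split; [apply actE_Kinv|].
    apply Hl. rewrite aorg, He, actV_invK. reflexivity.
Qed.

Lemma vdeg_is_act v n g : vdeg_is Gm v n -> vdeg_is Gm (aV g v) n.
Proof.
  intros [l [Hnd [Hlen Hl]]]. exists (map (aE g) l).
  split; [|split; [rewrite length_map; exact Hlen|apply act_star; exact Hl]].
  apply NoDup_map_NoDup_ForallPairs; [|exact Hnd].
  intros x y _ _ Hxy. rewrite <- (actE_invK g x), Hxy, actE_invK. reflexivity.
Qed.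

End GraphAction.

Arguments actE_invK {G Gm aV aE}.
Arguments actE_Kinv {G Gm aV aE}.
Arguments actV_invK {G Gm aV aE}.
Arguments act_star {G Gm aV aE}.
Arguments vdeg_is_act {G Gm aV aE}.

Section QuotientGraph.

Variables (G : TopGroup) (N : G -> Prop) (Gm : graph)
  (aV : G -> V Gm -> V Gm) (aE : G -> E Gm -> E Gm)
  (D : graph) (pV : V Gm -> V D) (pE : E Gm -> E D).
Hypothesis Hact : graph_action G Gm aV aE.
Hypothesis HD : is_quotient_graph G N Gm aV aE D pV pE.

Lemma quotient_reach x y : reach Gm x y -> reach D (pV x) (pV y).
Proof.
  destruct HD as [_ [_ [_ [_ [qorg qrev]]]]].
  induction 1 as [|e _ IH]; [constructor|].
  unfold term. rewrite <- qorg, <- qrev. apply reach_step. rewrite qorg. exact IH.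
Qed.

Lemma quotient_connected : connected_graph Gm -> connected_graph D.
Proof.
  destruct HD as [sV _]. intros [[v] Hreach]. split; [constructor; exact (pV v)|].
  intros u w. destruct (sV u) as [x <-]. destruct (sV w) as [y <-].
  apply quotient_reach, Hreach.
Qed.

Lemma quotient_star (v : V Gm) (l : list (E Gm)) :
  (forall e, In e l <-> org e = v) -> forall f, org f = pV v <-> img pE l f.
Proof.
  destruct HD as [_ [sE [kV [kE [qorg _]]]]].
  destruct Hact as [_ [_ [_ [_ [aorg _]]]]]. intros Hl f. split.
  - intros Hf. destruct (sE f) as [e <-]. rewrite qorg in Hf.
    apply kV in Hf. destruct Hf as [n [Nn Hn]]. exists (aE n e). split.
    + apply Hl. rewrite aorg. exact Hn.
    + symmetry. apply kE. exists n; auto.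
  - intros [x [Hx <-]]. rewrite qorg. f_equal. apply Hl; exact Hx.
Qed.

Lemma acts_freely_injective_on_star (v : V Gm) (l : list (E Gm)) :
  (forall e, In e l <-> org e = v) ->
  acts_freely_mod_kernel N Gm aV aE -> injective_on pE l.
Proof.
  destruct HD as [_ [_ [_ [kE _]]]].
  destruct Hact as [_ [_ [_ [_ [aorg _]]]]].
  intros Hl Hfree x y Hx Hy Hxy. apply kE in Hxy. destruct Hxy as [n [Nn Hn]].
  apply Hl in Hx. apply Hl in Hy.
  assert (Hnv : aV n v = v) by (rewrite <- Hx, <- aorg, Hn, Hx; exact Hy).
  destruct (Hfree v n Nn Hnv) as [_ HfixE]. rewrite <- Hn, HfixE. reflexivity.
Qed.

Hypothesis HNconj : forall g n, N n -> N (gmul (ginv g) (gmul n g)).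

Lemma pE_act g e1 e2 : pE e1 = pE e2 -> pE (aE g e1) = pE (aE g e2).
Proof.
  destruct HD as [_ [_ [_ [kE _]]]].
  destruct Hact as [_ [_ [_ [aM _]]]]. intros H.
  apply kE in H. destruct H as [n [Nn Hn]]. apply kE.
  exists (gmul g (gmul n (ginv g))). split.
  - pose proof (HNconj (ginv g) n Nn) as Hc. rewrite invgK in Hc. exact Hc.
  - rewrite aM, aM, (actE_invK Hact), Hn; auto.
Qed.

Lemma pE_act_iff g e1 e2 : pE (aE g e1) = pE (aE g e2) <-> pE e1 = pE e2.
Proof.
  split; [|apply pE_act]. intros H.
  apply (pE_act (ginv g)) in H. rewrite !(actE_invK Hact) in H; exact H.
Qed.

Lemma quotient_vdeg (v : V Gm) (l r : list (E Gm)) g :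
  (forall e, In e l <-> org e = v) -> transversal pE l r ->
  vdeg_is D (pV (aV g v)) (length r).
Proof.
  intros Hl Hr. apply (has_card_ext (img (fun e => pE (aE g e)) l)).
  - intros f. rewrite (quotient_star _ _ (act_star Hact v l g Hl) f).
    split.
    + intros [x [Hx <-]]. exists (aE g x). split; [apply in_map|]; auto.
    + intros [x [Hx <-]]. apply in_map_iff in Hx. destruct Hx as [y [<- Hy]].
      exists y; auto.
  - apply img_card_transversal. eapply transversal_same_fibres; [|exact Hr].
    intros x y. symmetry. apply pE_act_iff.
Qed.

Section InjectiveStars.

Hypothesis Hreach : forall u w : V Gm, reach Gm u w.
Hypothesis Htrans : vertex_transitive G Gm aV.

Lemma injective_on_every_star (v : V Gm) (l : list (E Gm)) :
  (forall e, In e l <-> org e = v) -> injective_on pE l ->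
  forall e1 e2, org e1 = org e2 -> pE e1 = pE e2 -> e1 = e2.
Proof.
  destruct Hact as [_ [_ [_ [_ [aorg _]]]]].
  intros Hl Hinj e1 e2 Horg Hp. destruct (Htrans v (org e1)) as [g Hg].
  assert (Hback : aE (ginv g) e1 = aE (ginv g) e2).
  { apply Hinj.
    - apply Hl. rewrite aorg, <- Hg, (actV_invK Hact); auto.
    - apply Hl. rewrite aorg, <- Horg, <- Hg, (actV_invK Hact); auto.
    - apply pE_act; exact Hp. }
  rewrite <- (actE_Kinv Hact g e1), Hback, (actE_Kinv Hact); reflexivity.
Qed.

(* Injectivity on stars makes the fixed-point set of [n] closed under
   crossing an edge; connectedness does the rest. *)
Lemma injective_on_star_acts_freely (v : V Gm) (l : list (E Gm)) :
  (forall e, In e l <-> org e = v) -> injective_on pE l ->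
  acts_freely_mod_kernel N Gm aV aE.
Proof.
  destruct HD as [_ [_ [_ [kE _]]]].
  destruct Hact as [_ [_ [_ [_ [aorg arev]]]]].
  intros Hl Hinj u n Nn Hu.
  assert (HfixE : forall e, aV n (org e) = org e -> aE n e = e).
  { intros e He. apply (injective_on_every_star v l Hl Hinj).
    - rewrite aorg; exact He.
    - symmetry. apply kE. exists n; auto. }
  assert (HfixV : forall w, aV n w = w).
  { intros w. induction (Hreach u w) as [|e _ IH]; [exact Hu|].
    unfold term. rewrite <- aorg, <- arev, (HfixE e IH). reflexivity. }
  split; [exact HfixV|]. intros e. apply HfixE, HfixV.
Qed.

End InjectiveStars.

Lemma quotient_deg :
  connected_graph Gm -> finite_degree Gm -> vertex_transitive G Gm aV ->
  exists d d', deg_is Gm d /\ deg_is D d' /\ d' <= d /\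
    (d' = d <-> acts_freely_mod_kernel N Gm aV aE).
Proof.
  destruct HD as [sV _]. intros [[v0] Hreach] [dd Hfin] Htrans.
  destruct (Hfin v0) as [k [_ [l0 [Hnd [_ Hl0]]]]].
  destruct (transversal_exists _ _ pE l0) as [r0 Hr0].
  assert (HdegGm : forall v, vdeg_is Gm v (length l0)).
  { intros v. destruct (Htrans v0 v) as [g <-].
    apply (vdeg_is_act Hact). exists l0; auto. }
  assert (HdegD : forall w, vdeg_is D w (length r0)).
  { intros w. destruct (sV w) as [v <-]. destruct (Htrans v0 v) as [g <-].
    apply (quotient_vdeg v0 l0 r0 g Hl0 Hr0). }
  exists (length l0), (length r0). split; [|split; [|split]].
  - split; [intros v; exists (length l0); auto|exists v0; apply HdegGm].
  - split; [intros w; exists (length r0); auto|exists (pV v0); apply HdegD].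
  - apply (transversal_length_le _ _ pE l0 r0 Hnd Hr0).
  - rewrite (transversal_length_eq_iff _ _ pE l0 r0 Hnd Hr0). split.
    + apply (injective_on_star_acts_freely Hreach Htrans v0 l0 Hl0).
    + apply (acts_freely_injective_on_star v0 l0 Hl0).
Qed.

End QuotientGraph.

Section ContinuousImage.

Variables (G Q : TopGroup) (pi : G -> Q).
Hypothesis pi_cont : forall U, gopen U -> gopen (fun g => U (pi g)).

Lemma connected_set_image (C : G -> Prop) :
  connected_set C -> connected_set (fun q => exists g, C g /\ pi g = q).
Proof.
  intros HC [U [W [HU [HW [Hcov [[x [[g [Cg <-]] Ux]] [[y [[g' [Cg' <-]] Wy]] Hdis]]]]]]].
  apply HC. exists (fun g => U (pi g)), (fun g => W (pi g)).
  split; [apply pi_cont; exact HU|]. split; [apply pi_cont; exact HW|].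
  split; [intros z Cz; apply Hcov; exists z; auto|].
  split; [exists g; auto|]. split; [exists g'; auto|].
  intros z Cz Uz Wz. apply (Hdis (pi z)); auto. exists z; auto.
Qed.

Hypothesis pi_mul : forall x y, pi (gmul x y) = gmul (pi x) (pi y).

Lemma hom_one : pi gone = gone.
Proof. apply mulg_idem_one. rewrite <- pi_mul, gmul1g. reflexivity. Qed.

Lemma id_component_image h : id_component G h -> id_component Q (pi h).
Proof.
  intros [C [HC [C1 Ch]]]. exists (fun q => exists g, C g /\ pi g = q).
  split; [apply connected_set_image; exact HC|].
  split; [exists gone; split; [|apply hom_one]|exists h]; auto.
Qed.

(* Pull the cover back along [pi], take a finite subcover upstairs, and
   choose for each of its members a cover set it came from. *)
Lemma compact_mod_image (H : G -> Prop) (H' : Q -> Prop) (U : G -> Prop) :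
  (forall h, H h -> H' (pi h)) -> compact_mod H U ->
  compact_mod H' (fun q => exists g, U g /\ pi g = q).
Proof.
  intros HH' HU F HF Hcov.
  destruct (HU (fun W' => exists W, F W /\ W' = fun g => W (pi g))) as [l [Hl Hlcov]].
  - intros W' [W [FW ->]]. split; [apply pi_cont, HF, FW|].
    intros x h Hx Hh. rewrite pi_mul. apply (proj2 (HF W FW)); auto.
  - intros x Ux. destruct (Hcov (pi x)) as [W [FW Wx]]; [exists x; auto|].
    exists (fun g => W (pi g)). split; [exists W; auto|exact Wx].
  - destruct (list_choice (fun (W' : G -> Prop) W => F W /\ W' = fun g => W (pi g)) l)
      as [lW [HlW HlWcov]]; [intros W' HW'; apply Hl, HW'|].
    exists lW. split.
    + intros W HW. destruct (HlW W HW) as [_ [_ [FW _]]]. exact FW.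
    + intros q [g [Ug <-]]. destruct (Hlcov g Ug) as [W' [HW' W'g]].
      destruct (HlWcov W' HW') as [W [HW [_ ->]]]. exists W; auto.
Qed.

End ContinuousImage.

Section QuotientAction.

Variables (G : TopGroup) (N : G -> Prop) (Gm : graph)
  (aV : G -> V Gm -> V Gm) (aE : G -> E Gm -> E Gm)
  (D : graph) (pV : V Gm -> V D) (pE : E Gm -> E D)
  (Q : TopGroup) (pi : G -> Q) (bV : Q -> V D -> V D) (bE : Q -> E D -> E D).
Hypothesis Hact : graph_action G Gm aV aE.
Hypothesis HD : is_quotient_graph G N Gm aV aE D pV pE.
Hypothesis Hpi : is_quotient_map N pi.
Hypothesis HbV : forall g v, bV (pi g) (pV v) = pV (aV g v).
Hypothesis HbE : forall g e, bE (pi g) (pE e) = pE (aE g e).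

Lemma quotient_graph_action : graph_action Q D bV bE.
Proof.
  destruct Hact as [a1V [a1E [aMV [aME [aorg arev]]]]].
  destruct HD as [sV [sE [_ [_ [qorg qrev]]]]].
  destruct Hpi as [pi_mul [pi_onto _]].
  pose proof (hom_one G Q pi pi_mul) as pi1.
  split; [|split; [|split; [|split; [|split]]]].
  - intros w. destruct (sV w) as [v <-]. rewrite <- pi1, HbV, a1V. reflexivity.
  - intros f. destruct (sE f) as [e <-]. rewrite <- pi1, HbE, a1E. reflexivity.
  - intros q1 q2 w. destruct (pi_onto q1) as [g1 <-]. destruct (pi_onto q2) as [g2 <-].
    destruct (sV w) as [v <-]. rewrite <- pi_mul, !HbV, aMV. reflexivity.
  - intros q1 q2 f. destruct (pi_onto q1) as [g1 <-]. destruct (pi_onto q2) as [g2 <-].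
    destruct (sE f) as [e <-]. rewrite <- pi_mul, !HbE, aME. reflexivity.
  - intros q f. destruct (pi_onto q) as [g <-]. destruct (sE f) as [e <-].
    rewrite HbE, !qorg, aorg, HbV. reflexivity.
  - intros q f. destruct (pi_onto q) as [g <-]. destruct (sE f) as [e <-].
    rewrite HbE, !qrev, arev, HbE. reflexivity.
Qed.

Lemma quotient_vertex_transitive :
  vertex_transitive G Gm aV -> vertex_transitive Q D bV.
Proof.
  destruct HD as [sV _]. intros Htrans w1 w2.
  destruct (sV w1) as [u <-]. destruct (sV w2) as [v <-].
  destruct (Htrans u v) as [g Hg]. exists (pi g). rewrite HbV, Hg. reflexivity.
Qed.

(* If [pi g] fixes [N v], some [n] in N sends [g v] back to [v]; then
   [n g] fixes [v] and [pi (n g) = pi g]. *)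
Lemma stabilizer_quotient v :
  stabilizer bV (pV v) = fun q => exists g, stabilizer aV v g /\ pi g = q.
Proof.
  destruct Hact as [_ [_ [aMV _]]]. destruct HD as [_ [_ [kV _]]].
  destruct Hpi as [pi_mul [pi_onto [pi_ker _]]].
  apply functional_extensionality; intro q. apply propositional_extensionality.
  unfold stabilizer. split.
  - intro Hq. destruct (pi_onto q) as [g0 <-]. rewrite HbV in Hq.
    apply kV in Hq. destruct Hq as [n [Nn Hn]]. exists (gmul n g0). split.
    + rewrite aMV. exact Hn.
    + rewrite pi_mul, (proj2 (pi_ker n) Nn), gmul1g. reflexivity.
  - intros [g [Hg <-]]. rewrite HbV, Hg. reflexivity.
Qed.

End QuotientAction.

Lemma quotient_cayley_abels (G : TopGroup) (N : G -> Prop) (Gm : graph)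
  (aV : G -> V Gm -> V Gm) (aE : G -> E Gm -> E Gm)
  (D : graph) (pV : V Gm -> V D) (pE : E Gm -> E D)
  (Q : TopGroup) (pi : G -> Q) (bV : Q -> V D -> V D) (bE : Q -> E D -> E D) :
  is_quotient_graph G N Gm aV aE D pV pE ->
  (forall g n, N n -> N (gmul (ginv g) (gmul n g))) ->
  is_quotient_map N pi ->
  (forall g v, bV (pi g) (pV v) = pV (aV g v)) ->
  (forall g e, bE (pi g) (pE e) = pE (aE g e)) ->
  cayley_abels G Gm aV aE -> cayley_abels Q D bV bE.
Proof.
  intros HD HNconj Hpi HbV HbE [Hconn [Hfin [Hact [Htrans Hstab]]]].
  destruct (quotient_deg G N Gm aV aE D pV pE Hact HD HNconj Hconn Hfin Htrans)
    as [_ [d' [_ [[HdegD _] _]]]].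
  pose proof Hpi as [pi_mul [pi_onto [_ [pi_cont pi_open]]]].
  split; [apply (quotient_connected G N Gm aV aE D pV pE HD Hconn)|].
  split; [exists d'; exact HdegD|].
  split; [eapply quotient_graph_action; eauto|].
  split; [eapply quotient_vertex_transitive; eauto|].
  intros w. destruct (proj1 HD w) as [v <-].
  erewrite stabilizer_quotient; eauto.
  destruct (Hstab v) as [Hopen Hcomp]. split; [apply pi_open, Hopen|].
  apply (compact_mod_image G Q pi pi_cont pi_mul (id_component G)); [|exact Hcomp].
  apply (id_component_image G Q pi pi_cont pi_mul).
Qed.

Theorem mainTheorem4 (G : TopGroup) (N : G -> Prop) (Gm : graph)
  (aV : G -> V Gm -> V Gm) (aE : G -> E Gm -> E Gm)
  (HGlc : locally_compact G) (HGcg : compactly_generated G)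
  (HN : closed_normal_subgroup N)
  (Hconn : connected_graph Gm) (Hfin : finite_degree Gm)
  (Hact : graph_action G Gm aV aE) (Htrans : vertex_transitive G Gm aV)
  (D : graph) (pV : V Gm -> V D) (pE : E Gm -> E D)
  (HD : is_quotient_graph G N Gm aV aE D pV pE) :
  (* (1) *)
  (cayley_abels G Gm aV aE ->
   forall (Q : TopGroup) (pi : G -> Q)
          (bV : Q -> V D -> V D) (bE : Q -> E D -> E D),
     is_quotient_map N pi ->
     (forall g v, bV (pi g) (pV v) = pV (aV g v)) ->
     (forall g e, bE (pi g) (pE e) = pE (aE g e)) ->
     cayley_abels Q D bV bE) /\
  (* (2) *)
  (exists d d', deg_is Gm d /\ deg_is D d' /\ d' <= d /\
     (d' = d <-> acts_freely_mod_kernel N Gm aV aE)).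
Proof.
  destruct HN as [_ [HNconj _]]. split.
  - intros HCA Q pi bV bE Hpi HbV HbE.
    exact (quotient_cayley_abels G N Gm aV aE D pV pE Q pi bV bE HD HNconj Hpi HbV HbE HCA).
  - exact (quotient_deg G N Gm aV aE D pV pE Hact HD HNconj Hconn Hfin Htrans).
Qed.
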